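(* Given $\lambda\ge1$, $\varepsilon>0$ and a positive integer $k$, there is an integer $n$ such that every $\lambda$-triangular sequence (in any Banach space) of length at least $n$ has a $\big(\frac{\lambda^2+1}{2}+\varepsilon\big)$-wide-$(s)$ subsequence of length $k$.
   Context: Given $\lambda\ge1$, a finite or infinite sequence $(b_j)$ in a Banach space $X$ is $\lambda$-triangular if there is a sequence $(f_j)$ in $X^*$ (of the same length) with $f_i(b_j)=1$ for all $j\ge i$, $f_i(b_j)=0$ for all $j<i$, and $\|f_j\|\le\lambda$, $\|b_j\|\le\lambda$ for all $j$. A sequence $(b_j)$ is $\mu$-basic if $\|\sum_{j=1}^k c_jb_j\|\le\mu\|\sum_j c_jb_j\|$ for all $k$ and scalars $(c_j)$. For $\lambda\ge1$, a finite or infinite sequence $(b_j)$ is $\lambda$-wide-$(s)$ if (a) it is $2\lambda$-basic; (b) $\|b_j\|\le\lambda$ for all $j$; (c) $|\sum_{j=k}^n c_j|\le\lambda\|\sum_{j=1}^n c_jb_j\|$ for all $1\le k\le n\le$ length and scalars $c_1,\dots,c_n$. *)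

From HB Require Import structures.
From mathcomp Require Import all_boot all_order all_algebra.
From mathcomp Require Import all_classical all_reals all_analysis.
Set Implicit Arguments. Unset Strict Implicit. Unset Printing Implicit Defensive.
Import Order.TTheory GRing.Theory Num.Theory.
Import numFieldNormedType.Exports.
Local Open Scope ring_scope.

(* Finite sequences of length m are encoded as b : nat -> X, indexed 0..m-1. *)

Definition bounded_functional {R : realType} {X : normedModType R}
  (lam : R) (f : X -> R) : Prop :=
  (forall (a : R) (x y : X), f (a *: x + y) = a * f x + f y) /\
  (forall x : X, `|f x| <= lam * `|x|).

Definition triangular {R : realType} {X : normedModType R}
  (lam : R) (m : nat) (b : nat -> X) : Prop :=
  exists f : nat -> X -> R,
    (forall i j, (i < m)%N -> (j < m)%N -> (i <= j)%N -> f i (b j) = 1) /\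
    (forall i j, (i < m)%N -> (j < m)%N -> (j < i)%N -> f i (b j) = 0) /\
    (forall i, (i < m)%N -> bounded_functional lam (f i)) /\
    (forall j, (j < m)%N -> `|b j| <= lam).

Definition basic {R : realType} {X : normedModType R}
  (mu : R) (m : nat) (b : nat -> X) : Prop :=
  forall (k : nat) (c : nat -> R), (k <= m)%N ->
    `|\sum_(j < k) c j *: b j| <= mu * `|\sum_(j < m) c j *: b j|.

Definition wide_s {R : realType} {X : normedModType R}
  (lam : R) (m : nat) (b : nat -> X) : Prop :=
  basic (2 * lam) m b /\
  (forall j, (j < m)%N -> `|b j| <= lam) /\
  (forall (k n : nat) (c : nat -> R), (k <= n)%N -> (n <= m)%N ->
     `|\sum_(k <= j < n) c j| <= lam * `|\sum_(j < n) c j *: b j|).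

Definition subseq_index (k m : nat) (phi : nat -> nat) : Prop :=
  (forall i, (i < k)%N -> (phi i < m)%N) /\
  (forall i j, (i < j)%N -> (j < k)%N -> (phi i < phi j)%N).

(* Ramsey's theorem, for the colouring of k-subsequences by the truncated norms
   of their combinations with coefficients in a finite grid of [-2 lam, 2 lam],
   gives a long subsequence H on which the norm of sum_j d_j b_(h_j), with
   |d_j| <= 2 lam, barely depends on which k elements h_1 < ... < h_k of H are
   used.  The first k elements of H form the wanted subsequence.  The triangular
   functionals give the tail estimate |sum_(i <= j < n) d_j| <= lam |x| and the
   coefficient bound |d_j| <= 2 lam |x|.  For basicity let |x| <= 1 and let y be
   an initial segment of x.  A norming functional g of y, built by Hahn-Banach on
   the span of y and the unused elements of H, takes values in [-lam, lam] on
   them, so by pigeonhole it is almost a constant L on k of them.  Moving the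
   tail of x onto these changes |x| by at most eps, and then
   |y| = g y <= |y + tail| - sum_(j >= r) d_j g(b_(p_j)) <= 1 + eps + lam^2 + eps. *)

From HB Require Import structures.
From mathcomp Require Import all_boot all_order all_algebra.
From mathcomp Require Import all_classical all_reals all_analysis.
From mathcomp Require Import zify ring lra.
Set Implicit Arguments. Unset Strict Implicit. Unset Printing Implicit Defensive.
Import Order.TTheory GRing.Theory Num.Theory.
Import numFieldNormedType.Exports.
Local Open Scope ring_scope.

Section Ramsey.
Local Open Scope nat_scope.

Lemma pigeonhole_count C M (s : seq nat) :
  all (fun x => x < C.+1) s -> C.+1 * M <= size s ->
  exists2 c, c < C.+1 & M <= count (pred1 c) s.
Proof.
elim: C s => [|C IH] s s_lt size_s.
  exists 0 => //; rewrite mul1n in size_s.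
  rewrite (eq_in_count (a2 := predT)) ?count_predT // => x /(allP s_lt).
  by rewrite ltnS leqn0.
have [le_M_count|lt_count_M] := leqP M (count (pred1 C.+1) s); first by exists C.+1.
pose s' := seq.filter (predC (pred1 C.+1)) s.
have s'_lt : all (fun x => x < C.+1) s'.
  rewrite all_filter; apply/allP => x /(allP s_lt); rewrite ltnS leq_eqVlt /=.
  by case: eqP.
have size_s' : C.+1 * M <= size s'.
  rewrite /s' size_filter; rewrite -(count_predC (pred1 C.+1) s) mulSn in size_s; lia.
have [c c_lt le_M_count] := IH s' s'_lt size_s'.
exists c; first exact: ltnW.
by rewrite count_filter in le_M_count; apply: leq_trans le_M_count (sub_count _ _) => x /andP[].
Qed.

Definition monochromatic (chi : seq nat -> nat) (k : nat) (H : seq nat) (c : nat) :=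
  forall T, subseq T H -> size T = k -> chi T = c.

Fixpoint prehomogeneous (chi : seq nat -> nat) (k : nat) (ps : seq (nat * nat)) : Prop :=
  if ps is p :: ps' then
    (forall T, subseq T (map fst ps') -> size T = k -> chi (p.1 :: T) = p.2)
    /\ prehomogeneous chi k ps'
  else True.

Lemma prehomogeneous_subseq chi k ps qs :
  subseq qs ps -> prehomogeneous chi k ps -> prehomogeneous chi k qs.
Proof.
elim: ps qs => [|p ps IH] [|q qs] //=.
case: eqP => [<-|_] sub_qs [head_p pre_ps]; last exact: IH (q :: qs) sub_qs pre_ps.
split; last exact: IH qs sub_qs pre_ps.
by move=> T sub_T; apply: head_p; apply: subseq_trans sub_T (map_subseq _ _).
Qed.

Lemma prehomogeneous_monochromatic chi k ps c :
  prehomogeneous chi k ps -> all (fun p => p.2 == c) ps ->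
  monochromatic chi k.+1 (map fst ps) c.
Proof.
elim: ps => [|p ps IH] /=; first by move=> _ _ [|t T].
move=> [head_p pre_ps] /andP[/eqP p_c all_c] [|t T] //= + [size_T].
case: eqP => [->|_] sub_T; first by rewrite -p_c; exact: head_p.
by apply: (IH pre_ps all_c (t :: T) sub_T); rewrite /= size_T.
Qed.

Section ExistsPrehomogeneous.
Variables (k C : nat).
Hypothesis ramsey_k : forall M, exists N, forall chi : seq nat -> nat,
  (forall T, chi T < C) -> forall S : seq nat, N <= size S ->
  exists H, [/\ subseq H S, size H = M & exists2 c, c < C & monochromatic chi k H c].

Lemma exists_prehomogeneous L : exists N, forall chi : seq nat -> nat,
  (forall T, chi T < C) -> forall S : seq nat, N <= size S ->
  exists ps, [/\ subseq (map fst ps) S, size ps = L, prehomogeneous chi k ps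
                 & all (fun p => p.2 < C) ps].
Proof.
elim: L => [|L [NL HNL]]; first by exists 0 => chi _ S _; exists [::]; rewrite sub0seq.
have [N HN] := ramsey_k NL.
exists N.+1 => chi chi_lt [|a S] //= size_S.
have [H [sub_H size_H [c c_lt mono_H]]] := HN (fun T => chi (a :: T)) (fun T => chi_lt _) S size_S.
have [ps [sub_ps size_ps pre_ps ps_lt]] := HNL chi chi_lt H (eq_leq (esym size_H)).
exists ((a, c) :: ps); rewrite /= eqxx size_ps c_lt; split=> //.
  exact: subseq_trans sub_ps sub_H.
by split=> // T sub_T; apply: mono_H; apply: subseq_trans sub_T sub_ps.
Qed.

End ExistsPrehomogeneous.

(* Erdos--Rado: pigeonholing the colours recorded along a long prehomogeneous
   sequence gives the monochromatic subsequence. *)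
Lemma ramsey_subseq k C M : exists N, forall chi : seq nat -> nat,
  (forall T, chi T < C) -> forall S : seq nat, N <= size S ->
  exists H, [/\ subseq H S, size H = M & exists2 c, c < C & monochromatic chi k H c].
Proof.
elim: k C M => [|k IHk] C M.
  exists M => chi chi_lt S size_S; exists (take M S); rewrite take_subseq size_takel //.
  by split=> //; exists (chi [::]) => // T _ /size0nil ->.
have [N HN] := exists_prehomogeneous (IHk C) (C * M).
exists N => chi chi_lt S size_S.
have [ps [sub_ps size_ps pre_ps ps_lt]] := HN chi chi_lt S size_S.
case: C chi_lt {HN} size_ps ps_lt => [chi_lt|C _ size_ps ps_lt]; first by have := chi_lt [::].
have [c c_lt le_M_count] : exists2 c, c < C.+1 & M <= count (pred1 c) (map snd ps).
  by apply: pigeonhole_count; rewrite ?all_map ?size_map ?size_ps.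
pose qs := take M (seq.filter (fun p => p.2 == c) ps).
have sub_qs : subseq qs ps := subseq_trans (take_subseq _ _) (filter_subseq _ _).
exists (map fst qs); split.
- exact: subseq_trans (map_subseq _ sub_qs) sub_ps.
- rewrite size_map size_takel // size_filter.
  by rewrite count_map in le_M_count.
- exists c => //; apply: prehomogeneous_monochromatic (prehomogeneous_subseq sub_qs pre_ps) _.
  by apply/allP => p /mem_take; rewrite mem_filter => /andP[].
Qed.

End Ramsey.

Definition grid (R : realType) (c w : R) (i : nat) : R := - c + i%:R * w.

Lemma grid_norm_le (R : realType) (c w : R) (i : nat) :
  0 < w -> 0 <= c -> (i <= Num.truncn (2 * c / w))%N -> `|grid c w i| <= c.
Proof.
move=> w_gt0 c_ge0; rewrite truncn_ge_nat; last by rewrite divr_ge0 ?mulr_ge0 // ltW.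
rewrite ler_pdivlMr // => i_le; rewrite ler_norml /grid.
have : 0 <= i%:R * w by rewrite mulr_ge0 // ltW.
lra.
Qed.

Lemma grid_truncn (R : realType) (c w d : R) : 0 < w -> `|d| <= c ->
  (Num.truncn ((d + c) / w) <= Num.truncn (2 * c / w))%N /\
  `|d - grid c w (Num.truncn ((d + c) / w))| <= w.
Proof.
move=> w_gt0; rewrite ler_norml => /andP[ge_d le_d].
have dc_ge0 : 0 <= (d + c) / w by apply: divr_ge0; [lra | exact: ltW].
split; first by apply: le_truncn; rewrite ler_pM2r ?invr_gt0 //; lra.
have /andP[] := truncn_itv dc_ge0; move: (Num.truncn _) => t.
rewrite -natr1 ler_pdivlMr // ltr_pdivrMr // mulrDl mul1r => ge_t lt_t.
by rewrite /grid ler_norml; apply/andP; split; lra.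
Qed.

Lemma dist_lt_of_truncn_eq (R : realType) (u v w : R) : 0 < w -> 0 <= u -> 0 <= v ->
  Num.truncn (u / w) = Num.truncn (v / w) -> `|u - v| < w.
Proof.
move=> w_gt0 u_ge0 v_ge0 eq_t.
have /andP[] := truncn_itv (divr_ge0 u_ge0 (ltW w_gt0)).
have /andP[] := truncn_itv (divr_ge0 v_ge0 (ltW w_gt0)).
rewrite eq_t; move: (Num.truncn _) => t.
rewrite -natr1 !ler_pdivlMr // !ltr_pdivrMr // !mulrDl !mul1r.
by rewrite ltr_norml => *; apply/andP; split; lra.
Qed.

Lemma pigeonhole_close (R : realType) (T : eqType) (s : seq T) (val : T -> R) (lam w : R)
    (k : nat) :
  0 < w -> {in s, forall x, `|val x| <= lam} ->
  ((Num.truncn (2 * lam / w)).+1 * k <= size s)%N ->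
  exists P, [/\ subseq P s, size P = k & {in P &, forall x y, `|val x - val y| < w}].
Proof.
move=> w_gt0 val_le s_size.
pose bin x := Num.truncn ((val x + lam) / w).
have bin_ok x : x \in s -> 0 <= val x + lam /\ (bin x < (Num.truncn (2 * lam / w)).+1)%N.
  move=> /val_le; rewrite ler_norml => /andP[ge_val le_val]; split; first lra.
  by rewrite ltnS; apply: le_truncn; rewrite ler_pM2r ?invr_gt0 //; lra.
have [c _ count_c] : exists2 c, (c < (Num.truncn (2 * lam / w)).+1)%N
    & (k <= count (pred1 c) (map bin s))%N.
  apply: pigeonhole_count; last by rewrite size_map.
  by rewrite all_map; apply/allP => x /bin_ok [].
rewrite count_map in count_c.
exists (take k (seq.filter (fun x => bin x == c) s)); split.
- exact: subseq_trans (take_subseq _ _) (filter_subseq _ _).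
- by rewrite size_takel // size_filter.
move=> x y /mem_take + /mem_take; rewrite !mem_filter.
move=> /andP[/eqP bin_x x_s] /andP[/eqP bin_y y_s].
have -> : val x - val y = (val x + lam) - (val y + lam) by ring.
apply: dist_lt_of_truncn_eq w_gt0 (bin_ok x x_s).1 (bin_ok y y_s).1 _.
by rewrite -/(bin x) -/(bin y) bin_x bin_y.
Qed.

Lemma norm_sum_mul_near_const (R : realType) (r k : nat) (d u : nat -> R) (L D w : R) :
  (forall j, (r <= j < k)%N -> `|d j| <= D) -> (forall j, (r <= j < k)%N -> `|u j - L| <= w) ->
  `|\sum_(r <= j < k) d j * u j| <= `|L| * `|\sum_(r <= j < k) d j| + (k - r)%:R * (D * w).
Proof.
move=> d_le u_near.
have -> : \sum_(r <= j < k) d j * u j =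
    L * \sum_(r <= j < k) d j + \sum_(r <= j < k) d j * (u j - L).
  by rewrite mulr_sumr -big_split /=; apply: eq_bigr => j _; ring.
apply: le_trans (ler_normD _ _) _; rewrite normrM lerD2l.
apply: le_trans (ler_norm_sum _ _ _) _; rewrite mulr_natl -sumr_const_nat.
by apply: ler_sum_nat => j j_in; rewrite normrM ler_pM ?d_le ?u_near.
Qed.

Lemma sum_ord_if_eq (V : zmodType) (p i0 : nat) (F : nat -> V) : (i0 < p)%N ->
  \sum_(i < p) (if (i : nat) == i0 then F i else 0) = F i0.
Proof.
move=> i0_lt; rewrite (bigD1 (Ordinal i0_lt)) //= eqxx big1 ?addr0 // => i.
by rewrite -val_eqE /=; case: eqP.
Qed.

Section FiniteHahnBanach.
Variables (R : realType) (X : normedModType R).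

(* [g i] is the value at [v i] of a linear functional of norm at most 1 on the
   span of [v 0], ..., [v p.-1]. *)
Definition dominated (g : nat -> R) (v : nat -> X) (p : nat) :=
  forall a : nat -> R, \sum_(i < p) a i * g i <= `|\sum_(i < p) a i *: v i|.

Section OneStepExtension.
Variables (g : nat -> R) (v : nat -> X) (p : nat).
Hypothesis g_dom : dominated g v p.

Let F (a : nat -> R) := \sum_(i < p) a i * g i.
Let V (a : nat -> R) := \sum_(i < p) a i *: v i.

Let FD a w : F (fun i => a i + w i) = F a + F w.
Proof. by rewrite /F -big_split; apply: eq_bigr => i _; rewrite mulrDl. Qed.

Let VD a w : V (fun i => a i + w i) = V a + V w.
Proof. by rewrite /V -big_split; apply: eq_bigr => i _; rewrite scalerDl. Qed.

Let FZ s a : F (fun i => s * a i) = s * F a.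
Proof. by rewrite /F mulr_sumr; apply: eq_bigr => i _; rewrite mulrA. Qed.

Let VZ s a : V (fun i => s * a i) = s *: V a.
Proof. by rewrite /V scaler_sumr; apply: eq_bigr => i _; rewrite scalerA. Qed.

Let extension_value_bounds :
  exists t, forall a, F a - `|V a - v p| <= t /\ t <= `|V a + v p| - F a.
Proof.
have sep a w : F a - `|V a - v p| <= `|V w + v p| - F w.
  have : F (fun i => a i + w i) <= `|V (fun i => a i + w i)| := g_dom _.
  rewrite FD VD.
  have : `|V a + V w| <= `|V a - v p| + `|V w + v p|.
    have -> : V a + V w = (V a - v p) + (V w + v p) by rewrite addrACA addNr addr0.
    exact: ler_normD.
  lra.
pose A : set R := [set F a - `|V a - v p| | a in [set: nat -> R]]%classic.
have A_sup : has_sup A.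
  split; first by exists (F (fun=> 0) - `|V (fun=> 0) - v p|); exists (fun=> 0).
  by exists (`|V (fun=> 0) + v p| - F (fun=> 0)) => _ [a _ <-]; apply: sep.
exists (sup A) => a; split; first by apply: sup_upper_bound => //; exists a.
by apply: ge_sup => //; [case: A_sup | move=> _ [w _ <-]; apply: sep].
Qed.

(* Dividing by [|a p|] reduces the claim to the two bounds on [t]. *)
Lemma dominated_extend : exists t, dominated (fun i => if i == p then t else g i) v p.+1.
Proof.
have [t t_bounds] := extension_value_bounds; exists t => a.
rewrite !big_ord_recr /= eqxx.
rewrite (eq_bigr (fun i : 'I_p => a i * g i)) => [|i _]; last by rewrite ltn_eqF.
rewrite -/(F a) -/(V a).
have [ap_lt0|ap_gt0|->] := ltgtP (a p) 0; last by rewrite mul0r scale0r !addr0; apply: g_dom.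
- have [+ _] := t_bounds (fun i => (- a p)^-1 * a i); rewrite FZ VZ => le_t.
  have s_gt0 : 0 < - a p by rewrite oppr_gt0.
  have norm_e : `|V a + a p *: v p| = - a p * `|(- a p)^-1 *: V a - v p|.
    have -> : V a + a p *: v p = - a p *: ((- a p)^-1 *: V a - v p).
      by rewrite scalerBr scalerA mulfV ?gt_eqF // scale1r scaleNr opprK.
    by rewrite normrZ gtr0_norm.
  have := ler_wpM2l (ltW s_gt0) le_t.
  by rewrite mulrBr mulrA mulfV ?gt_eqF // mul1r -norm_e mulNr; lra.
- have [_ +] := t_bounds (fun i => (a p)^-1 * a i); rewrite FZ VZ => le_t.
  have norm_e : `|V a + a p *: v p| = a p * `|(a p)^-1 *: V a + v p|.
    have -> : V a + a p *: v p = a p *: ((a p)^-1 *: V a + v p).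
      by rewrite scalerDr scalerA mulfV ?gt_eqF // scale1r.
    by rewrite normrZ gtr0_norm.
  have := ler_wpM2l (ltW ap_gt0) le_t.
  by rewrite mulrBr mulrA mulfV ?gt_eqF // mul1r -norm_e; lra.
Qed.

End OneStepExtension.

Lemma hahn_banach_finite (v : nat -> X) (p : nat) : (0 < p)%N ->
  exists g : nat -> R, g 0%N = `|v 0%N| /\ dominated g v p.
Proof.
case: p => // p _; elim: p => [|p [g [g0 g_dom]]].
  exists (fun=> `|v 0%N|); split => // a.
  by rewrite !big_ord1 normrZ ler_wpM2r ?ler_norm.
have [t t_dom] := dominated_extend g_dom.
by exists (fun i => if i == p.+1 then t else g i).
Qed.

Lemma dominated_sum_seq (g : nat -> R) (v : nat -> X) (p : nat) (I : eqType)
    (J : seq I) (a : I -> R) (idx : I -> nat) :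
  dominated g v p -> {in J, forall j, (idx j < p)%N} ->
  \sum_(j <- J) a j * g (idx j) <= `|\sum_(j <- J) a j *: v (idx j)|.
Proof.
move=> g_dom idx_lt.
have := g_dom (fun i => \sum_(j <- J) (if idx j == i then a j else 0)).
rewrite (eq_bigr (fun i : 'I_p => \sum_(j <- J) (if (i : nat) == idx j then a j * g i else 0))).
  rewrite (eq_bigr (fun i : 'I_p => \sum_(j <- J) (if (i : nat) == idx j then a j *: v i else 0))).
    rewrite exchange_big [X in _ <= `|X|]exchange_big /= !big_seq.
    rewrite (eq_bigr (fun j => a j * g (idx j))) => [|j Jj].
      rewrite (eq_bigr (fun j => a j *: v (idx j))) // => j Jj.
      exact: (sum_ord_if_eq (fun i => a j *: v i) (idx_lt j Jj)).
    exact: (sum_ord_if_eq (fun i => a j * g i) (idx_lt j Jj)).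
  move=> i _; rewrite scaler_suml; apply: eq_bigr => j _.
  by rewrite eq_sym; case: eqP; rewrite ?scale0r.
move=> i _; rewrite mulr_suml; apply: eq_bigr => j _.
by rewrite eq_sym; case: eqP; rewrite ?mul0r.
Qed.

Lemma dominated_le_norm (g : nat -> R) (v : nat -> X) (p i : nat) :
  dominated g v p -> (i < p)%N -> `|g i| <= `|v i|.
Proof.
move=> g_dom i_lt; have i_in : {in [:: i], forall j, (id j < p)%N}.
  by move=> j; rewrite inE => /eqP ->.
have dom_i (s : R) := @dominated_sum_seq g v p _ [:: i] (fun=> s) id g_dom i_in.
have := dom_i 1; have := dom_i (-1).
rewrite !big_seq1 /= scaleN1r normrN mulN1r scale1r mul1r => ge_g le_g.
by rewrite ler_norml; apply/andP; split; lra.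
Qed.

End FiniteHahnBanach.

Lemma exists_norming_functional_on_block (R : realType) (X : normedModType R) (b : nat -> X)
    (y : X) (S : seq nat) (lam w : R) (k : nat) :
  0 < w -> {in S, forall h, `|b h| <= lam} ->
  ((Num.truncn (2 * lam / w)).+1 * k <= size S)%N ->
  exists (P : seq nat) (val : nat -> R),
    [/\ subseq P S, size P = k, {in P, forall h, `|val h| <= lam},
        {in P &, forall h h', `|val h - val h'| < w} &
        forall (J : seq nat) (a : nat -> R) (idx : nat -> nat), {in J, forall j, idx j \in P} ->
        `|y| + \sum_(j <- J) a j * val (idx j) <= `|y + \sum_(j <- J) a j *: b (idx j)|].
Proof.
move=> w_gt0 b_le S_size.
pose v i := if i is i'.+1 then b (nth 0%N S i') else y.
have [g [g_y g_dom]] := hahn_banach_finite v (ltn0Sn (size S)).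
pose val h := g (index h S).+1.
have val_le : {in S, forall h, `|val h| <= lam}.
  move=> h h_S; have h_lt : ((index h S).+1 < (size S).+1)%N by rewrite ltnS index_mem.
  by apply: le_trans (dominated_le_norm g_dom h_lt) _; rewrite /= nth_index // b_le.
have [P [P_sub P_size P_close]] := pigeonhole_close w_gt0 val_le S_size.
exists P, val; split => // [h /(mem_subseq P_sub)/val_le //|J a idx idx_P].
pose idx' (o : option nat) := if o is Some j then (index (idx j) S).+1 else 0%N.
have idx'_lt : {in None :: map Some J, forall o, (idx' o < (size S).+1)%N}.
  move=> [j|] //; rewrite in_cons /= (mem_map (@Some_inj _)) => j_J.
  by rewrite ltnS index_mem (mem_subseq P_sub) ?idx_P.
have := dominated_sum_seq (fun o => if o is Some j then a j else 1) g_dom idx'_lt.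
rewrite !big_cons !big_map /= g_y mul1r scale1r.
rewrite (eq_big_seq (fun j => a j *: b (idx j))) // => j j_J.
by rewrite /= nth_index // (mem_subseq P_sub) ?idx_P.
Qed.

Section NearlySpreading.
Variables (R : realType) (X : normedModType R).

Definition nearly_spreading (c eps : R) (k : nat) (b : nat -> X) (H : seq nat) :=
  forall T T' : seq nat, subseq T H -> subseq T' H -> size T = k -> size T' = k ->
  forall d : nat -> R, (forall j, (j < k)%N -> `|d j| <= c) ->
  `|\sum_(j < k) d j *: b (nth 0%N T j)| <= `|\sum_(j < k) d j *: b (nth 0%N T' j)| + eps.

Lemma norm_sum_scale_le (k : nat) (e : nat -> R) (u : nat -> X) (C lam : R) :
  (forall j, (j < k)%N -> `|e j| <= C) -> (forall j, (j < k)%N -> `|u j| <= lam) ->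
  `|\sum_(j < k) e j *: u j| <= k%:R * (C * lam).
Proof.
move=> e_le u_le; apply: le_trans (ler_norm_sum _ _ _) _.
have -> : k%:R * (C * lam) = \sum_(j < k) (C * lam) by rewrite sumr_const card_ord mulr_natl.
by apply: ler_sum => j _; rewrite normrZ ler_pM ?e_le ?u_le.
Qed.

Lemma norm_sum_perturb_le (k : nat) (d e : nat -> R) (u : nat -> X) (w lam : R) :
  (forall j, (j < k)%N -> `|d j - e j| <= w) -> (forall j, (j < k)%N -> `|u j| <= lam) ->
  `|\sum_(j < k) d j *: u j| <= `|\sum_(j < k) e j *: u j| + k%:R * (w * lam).
Proof.
move=> de_le u_le; have := norm_sum_scale_le de_le u_le.
rewrite (eq_bigr (fun j : 'I_k => d j *: u j - e j *: u j)) => [|j _]; last by rewrite scalerBl.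
rewrite sumrB; set x := \sum_(j < k) d j *: u j; set y := \sum_(j < k) e j *: u j.
by have := ler_normD y (x - y); rewrite addrC subrK; lra.
Qed.

Lemma spreading_replace_tail (c eps : R) (k : nat) (b : nat -> X) (H P : seq nat) (r : nat)
    (d : nat -> R) :
  nearly_spreading c eps k b H -> (k <= size H)%N -> subseq P (drop k H) ->
  (k - r <= size P)%N -> (r <= k)%N -> (forall j, (j < k)%N -> `|d j| <= c) ->
  `|\sum_(j < r) d j *: b (nth 0%N H j) + \sum_(r <= j < k) d j *: b (nth 0%N P (j - r))|
    <= `|\sum_(j < k) d j *: b (nth 0%N H j)| + eps.
Proof.
move=> H_sp k_le P_sub P_size r_le d_le.
pose T' := take r H ++ take (k - r) P.
have T'_sub : subseq T' H.
  rewrite -(cat_take_drop k H); apply: cat_subseq.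
    by rewrite -(take_takel _ r_le) take_subseq.
  exact: subseq_trans (take_subseq _ _) P_sub.
have r_le_H : (r <= size H)%N := leq_trans r_le k_le.
have T'_size : size T' = k by rewrite size_cat !size_takel // subnKC.
have split_T' : \sum_(j < k) d j *: b (nth 0%N T' j) =
    \sum_(j < r) d j *: b (nth 0%N H j) + \sum_(r <= j < k) d j *: b (nth 0%N P (j - r)).
  rewrite -(big_mkord xpredT (fun j => d j *: b (nth 0%N T' j))).
  rewrite (big_cat_nat (leq0n r) r_le) /= big_mkord; congr (_ + _).
    by apply: eq_bigr => j _; rewrite nth_cat size_takel // ltn_ord nth_take.
  apply: eq_big_nat => j /andP[r_le_j j_lt].
  rewrite nth_cat size_takel // ltnNge r_le_j /= nth_take //.
  by rewrite ltn_sub2r // (leq_ltn_trans r_le_j).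
have take_H : \sum_(j < k) d j *: b (nth 0%N (take k H) j) = \sum_(j < k) d j *: b (nth 0%N H j).
  by apply: eq_bigr => j _; rewrite nth_take.
rewrite -split_T' -take_H.
exact: H_sp T' (take k H) T'_sub (take_subseq _ _) T'_size (size_takel k_le) d d_le.
Qed.

End NearlySpreading.

Lemma nearly_spreading_of_grid (R : realType) (X : normedModType R) (c w dn lam eps : R)
    (k : nat) (b : nat -> X) (H : seq nat) :
  0 < w -> {in H, forall h, `|b h| <= lam} -> dn + 2 * (k%:R * (w * lam)) <= eps ->
  (forall z : nat -> nat, (forall j, (j < k)%N -> (z j <= Num.truncn (2 * c / w))%N) ->
   forall T T', subseq T H -> subseq T' H -> size T = k -> size T' = k ->
   `|\sum_(j < k) grid c w (z j) *: b (nth 0%N T j)|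
     <= `|\sum_(j < k) grid c w (z j) *: b (nth 0%N T' j)| + dn) ->
  nearly_spreading c eps k b H.
Proof.
move=> w_gt0 b_le eps_ge grid_near T T' T_sub T'_sub T_size T'_size d d_le.
pose z j := Num.truncn ((d j + c) / w).
have z_le j : (j < k)%N -> (z j <= Num.truncn (2 * c / w))%N.
  by move=> j_lt; have [] := grid_truncn w_gt0 (d_le j j_lt).
have d_near j : (j < k)%N -> `|d j - grid c w (z j)| <= w.
  by move=> j_lt; have [] := grid_truncn w_gt0 (d_le j j_lt).
have grid_near_d j : (j < k)%N -> `|grid c w (z j) - d j| <= w.
  by move=> j_lt; rewrite distrC d_near.
have b_le_on S : subseq S H -> size S = k -> forall j, (j < k)%N -> `|b (nth 0%N S j)| <= lam.
  by move=> S_sub S_size j j_lt; apply/b_le/(mem_subseq S_sub)/mem_nth; rewrite S_size.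
have := norm_sum_perturb_le d_near (b_le_on T T_sub T_size).
have := norm_sum_perturb_le grid_near_d (b_le_on T' T'_sub T'_size).
have := grid_near z z_le T T' T_sub T'_sub T_size T'_size.
lra.
Qed.

Lemma grid_error_le (R : realType) (lam eps : R) (k : nat) : 0 < lam -> 0 < eps ->
  eps / 2 + 2 * (k%:R * (eps / (4 * k.+1%:R * lam) * lam)) <= eps.
Proof.
move=> lam_gt0 eps_gt0; have -> : k%:R * (eps / (4 * k.+1%:R * lam) * lam) =
    eps / 4 * (k%:R / k.+1%:R) by field; rewrite !gt_eqF // ltr0n.
have ratio_le : eps / 4 * (k%:R / k.+1%:R) <= eps / 4.
  apply: ler_piMr; first by rewrite divr_ge0 // ltW.
  by rewrite ler_pdivrMr ?ltr0n // mul1r ler_nat.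
move: ratio_le; set q := eps / 4 * _ => ratio_le; lra.
Qed.

Lemma exists_nearly_spreading_subseq (R : realType) (c lam eps : R) (k K : nat) :
  0 <= c -> 0 < lam -> 0 < eps ->
  exists N, forall (X : normedModType R) (m : nat) (b : nat -> X),
    (forall j, (j < m)%N -> `|b j| <= lam) -> (N <= m)%N ->
    exists H, [/\ subseq H (iota 0 m), size H = K & nearly_spreading c eps k b H].
Proof.
move=> c_ge0 lam_gt0 eps_gt0.
pose w := eps / (4 * k.+1%:R * lam).
have w_gt0 : 0 < w by rewrite divr_gt0 ?mulr_gt0.
pose dn := eps / 2.
have dn_gt0 : 0 < dn by rewrite divr_gt0.
pose G := Num.truncn (2 * c / w).
pose B := Num.truncn (k%:R * (c * lam) / dn).
(* A [k]-subsequence is coloured by the truncated norms of all its grid combinations. *)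
pose colouring := {ffun {ffun 'I_k -> 'I_G.+1} -> 'I_B.+1}.
have [N HN] := ramsey_subseq k #|{: colouring}| K.
exists N => X m b b_le N_le.
pose gnorm (z : {ffun 'I_k -> 'I_G.+1}) T :=
  `|\sum_(j < k) grid c w (z j) *: b (nth 0%N T j)|.
pose colour T : colouring := [ffun z => inord (Num.truncn (gnorm z T / dn))].
have N_le_iota : (N <= size (iota 0 m))%N by rewrite size_iota.
have [H [H_sub H_size [col _ H_mono]]] :=
  HN (fun T => enum_rank (colour T)) (fun T => ltn_ord _) (iota 0 m) N_le_iota.
have H_b_le : {in H, forall h, `|b h| <= lam}.
  by move=> h /(mem_subseq H_sub); rewrite mem_iota => /b_le.
exists H; split => //.
apply: (nearly_spreading_of_grid (w := w) (dn := dn) (lam := lam)) => //.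
  exact: grid_error_le.
move=> z z_le T T' T_sub T'_sub T_size T'_size.
pose zf : {ffun 'I_k -> 'I_G.+1} := [ffun j : 'I_k => inord (z j)].
have gnorm_zf S : gnorm zf S = `|\sum_(j < k) grid c w (z j) *: b (nth 0%N S j)|.
  by congr `|_|; apply: eq_bigr => j _; rewrite ffunE inordK // ltnS z_le.
have gnorm_le S : subseq S H -> size S = k -> (Num.truncn (gnorm zf S / dn) < B.+1)%N.
  move=> S_sub S_size; rewrite ltnS; apply: le_truncn.
  rewrite ler_pM2r ?invr_gt0 // gnorm_zf.
  apply: (@norm_sum_scale_le R X k (fun j => grid c w (z j)) (fun j => b (nth 0%N S j))).
    by move=> j j_lt; rewrite grid_norm_le ?z_le.
  by move=> j j_lt; apply/H_b_le/(mem_subseq S_sub)/mem_nth; rewrite S_size.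
have trunc_eq : Num.truncn (gnorm zf T / dn) = Num.truncn (gnorm zf T' / dn).
  have : colour T = colour T' by apply: enum_rank_inj; apply: val_inj; rewrite /= !H_mono.
  by move/(congr1 (fun F : colouring => (F zf : nat))); rewrite !ffunE !inordK ?gnorm_le.
have := @dist_lt_of_truncn_eq R (gnorm zf T) (gnorm zf T') dn dn_gt0
  (normr_ge0 _) (normr_ge0 _) trunc_eq.
by rewrite !gnorm_zf ltr_norml => /andP[_ /ltW]; lra.
Qed.

Lemma subseq_iota_index (m n : nat) (H : seq nat) :
  subseq H (iota 0 m) -> (n <= size H)%N -> subseq_index n m (nth 0%N H).
Proof.
move=> H_sub n_le; have H_sorted := subseq_sorted ltn_trans H_sub (iota_ltn_sorted 0 m).
split=> [i i_lt|i j ij j_lt].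
  by have := mem_subseq H_sub (mem_nth 0%N (leq_trans i_lt n_le)); rewrite mem_iota.
by apply: (sorted_ltn_nth ltn_trans 0%N H_sorted); rewrite ?inE; lia.
Qed.

Lemma bounded_functional_sum (R : realType) (X : normedModType R) (lam : R) (f : X -> R)
    (n : nat) (c : nat -> R) (x : nat -> X) :
  bounded_functional lam f -> f (\sum_(j < n) c j *: x j) = \sum_(j < n) c j * f (x j).
Proof.
move=> [f_lin _]; have f0 : f 0 = 0.
  by have := f_lin 1 0 0; rewrite scale1r addr0 mul1r; lra.
elim: n => [|n IH]; first by rewrite !big_ord0.
by rewrite !big_ord_recr /= -IH addrC f_lin addrC.
Qed.

Lemma basic_of_unit_ball (R : realType) (X : normedModType R) (K : R) (k : nat) (u : nat -> X) :
  (forall (c : nat -> R) (r : nat), (r <= k)%N ->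
     `|\sum_(j < k) c j *: u j| <= 1 -> `|\sum_(j < r) c j *: u j| <= K) ->
  basic K k u.
Proof.
move=> u_ball r c r_le.
have sumZ n s : \sum_(j < n) (s * c j) *: u j = s *: \sum_(j < n) c j *: u j.
  by rewrite scaler_sumr; apply: eq_bigr => j _; rewrite scalerA.
have ballZ s : 0 <= s -> s * `|\sum_(j < k) c j *: u j| <= 1 ->
    s * `|\sum_(j < r) c j *: u j| <= K.
  move=> s_ge0; have := u_ball (fun j => s * c j) r r_le.
  by rewrite !sumZ !normrZ (ger0_norm s_ge0).
have K_ge0 : 0 <= K by have := ballZ 0 (lexx 0); rewrite !mul0r => /(_ ler01).
move: ballZ; set x := `|\sum_(j < k) _|; set y := `|\sum_(j < r) _| => ballZ.
have [x0|x_neq0] := eqVneq x 0.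
  have [y0|y_neq0] := eqVneq y 0; first by rewrite y0 x0 mulr0.
  have s_ge0 : 0 <= (K + 1) / y by rewrite divr_ge0 ?addr_ge0 ?ler01 ?normr_ge0.
  by have := ballZ _ s_ge0; rewrite x0 mulr0 divfK // => /(_ ler01); lra.
have := ballZ x^-1; rewrite invr_ge0 mulVf // => /(_ (normr_ge0 _) (lexx 1)) le_K.
have x_gt0 : 0 < x by rewrite lt0r x_neq0 normr_ge0.
by rewrite -ler_pdivrMr // mulrC.
Qed.

Section TriangularSequence.
Variables (R : realType) (X : normedModType R) (lam : R) (m : nat) (b : nat -> X)
  (f : nat -> X -> R).
Hypothesis lam_ge0 : 0 <= lam.
Hypothesis f_b_upper : forall i j, (i < m)%N -> (j < m)%N -> (i <= j)%N -> f i (b j) = 1.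
Hypothesis f_b_lower : forall i j, (i < m)%N -> (j < m)%N -> (j < i)%N -> f i (b j) = 0.
Hypothesis f_bounded : forall i, (i < m)%N -> bounded_functional lam (f i).
Hypothesis b_bounded : forall j, (j < m)%N -> `|b j| <= lam.

Lemma tail_sum_subseq (phi : nat -> nat) (n : nat) (c : nat -> R) (i : nat) :
  subseq_index n m phi -> (i < n)%N ->
  f (phi i) (\sum_(j < n) c j *: b (phi j)) = \sum_(i <= j < n) c j.
Proof.
move=> [phi_lt phi_inc] i_lt.
rewrite (bounded_functional_sum n c (fun j => b (phi j)) (f_bounded (phi_lt i i_lt))).
rewrite big_geq_mkord [RHS]big_mkcond /=.
apply: eq_bigr => j _; case: (leqP i j) => [ij|ji].
  rewrite f_b_upper ?mulr1 ?phi_lt //.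
  by move: ij; rewrite leq_eqVlt => /orP[/eqP -> //|ij]; rewrite ltnW ?phi_inc.
by rewrite f_b_lower ?mulr0 ?phi_lt ?phi_inc // (ltn_trans ji).
Qed.

Lemma norm_tail_sum_le (phi : nat -> nat) (n : nat) (c : nat -> R) (i : nat) :
  subseq_index n m phi -> (i <= n)%N ->
  `|\sum_(i <= j < n) c j| <= lam * `|\sum_(j < n) c j *: b (phi j)|.
Proof.
move=> phi_index; rewrite leq_eqVlt => /orP[/eqP ->|i_lt].
  by rewrite big_geq // normr0 mulr_ge0.
rewrite -(tail_sum_subseq c phi_index i_lt).
by apply: (proj2 (f_bounded _)); apply: phi_index.1.
Qed.

Lemma norm_coef_le (phi : nat -> nat) (n : nat) (c : nat -> R) (i : nat) :
  subseq_index n m phi -> (i < n)%N ->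
  `|c i| <= 2 * lam * `|\sum_(j < n) c j *: b (phi j)|.
Proof.
move=> phi_index i_lt.
have := norm_tail_sum_le c phi_index (ltnW i_lt).
have := norm_tail_sum_le c phi_index i_lt.
rewrite (big_ltn i_lt) => tail_le tail_Si_le.
have -> : c i = (c i + \sum_(i.+1 <= j < n) c j) - \sum_(i.+1 <= j < n) c j by rewrite addrK.
by apply: le_trans (ler_normB _ _) _; lra.
Qed.

Lemma norm_initial_sum_le (H : seq nat) (k : nat) (w eps : R) (d : nat -> R) (r : nat) :
  0 < w -> 0 <= eps -> subseq H (iota 0 m) ->
  (k + (Num.truncn (2 * lam / w)).+1 * k <= size H)%N ->
  nearly_spreading (2 * lam) eps k b H -> (r <= k)%N ->
  `|\sum_(j < k) d j *: b (nth 0%N H j)| <= 1 ->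
  `|\sum_(j < r) d j *: b (nth 0%N H j)| <= 1 + eps + lam ^+ 2 + 2 * (k%:R * (lam * w)).
Proof.
move=> w_gt0 eps_ge0 H_sub H_size H_sp r_le x_le.
have k_le : (k <= size H)%N := leq_trans (leq_addr _ _) H_size.
have H_index := subseq_iota_index H_sub k_le.
have d_le j : (j < k)%N -> `|d j| <= 2 * lam.
  by move=> j_lt; apply: le_trans (norm_coef_le d H_index j_lt) _; rewrite ler_piMr ?mulr_ge0.
have tail_le : `|\sum_(r <= j < k) d j| <= lam.
  by apply: le_trans (norm_tail_sum_le d H_index r_le) _; rewrite ler_piMr.
have err_ge0 : 0 <= 2 * (k%:R * (lam * w)) by rewrite !mulr_ge0 // ltW.
have [r_lt|k_le_r] := ltnP r k; last first.
  have -> : r = k by apply/eqP; rewrite eqn_leq r_le k_le_r.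
  by have := sqr_ge0 lam; lra.
have S_b_le : {in drop k H, forall h, `|b h| <= lam}.
  by move=> h /mem_drop /(mem_subseq H_sub); rewrite mem_iota => /b_bounded.
have S_size : ((Num.truncn (2 * lam / w)).+1 * k <= size (drop k H))%N.
  by rewrite size_drop leq_subRL.
have [P [val [P_sub P_size val_le P_close norming]]] :=
  exists_norming_functional_on_block (\sum_(j < r) d j *: b (nth 0%N H j)) w_gt0 S_b_le S_size.
pose pj j := nth 0%N P (j - r).
have pj_P j : j \in index_iota r k -> pj j \in P.
  by rewrite mem_index_iota => /andP[r_le_j j_lt]; apply: mem_nth; rewrite P_size; lia.
have replaced : `|\sum_(j < r) d j *: b (nth 0%N H j) + \sum_(r <= j < k) d j *: b (pj j)|
    <= `|\sum_(j < k) d j *: b (nth 0%N H j)| + eps.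
  by apply: spreading_replace_tail H_sp k_le P_sub _ r_le d_le; rewrite P_size leq_subr.
have normed := norming (index_iota r k) d pj pj_P.
have near : `|\sum_(r <= j < k) d j * val (pj j)|
    <= `|val (pj r)| * `|\sum_(r <= j < k) d j| + (k - r)%:R * (2 * lam * w).
  apply: norm_sum_mul_near_const => j j_in; first by apply: d_le; lia.
  by apply/ltW/P_close; apply: pj_P; rewrite mem_index_iota; lia.
have L_le : `|val (pj r)| * `|\sum_(r <= j < k) d j| <= lam * lam.
  by rewrite ler_pM // val_le // pj_P // mem_index_iota leqnn r_lt.
have kr_le : (k - r)%:R * (2 * lam * w) <= 2 * (k%:R * (lam * w)).
  rewrite [X in _ <= X](_ : _ = k%:R * (2 * lam * w)); last by ring.
  by rewrite ler_wpM2r ?ler_nat ?leq_subr // !mulr_ge0 // ltW.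
have := ler_norm (- \sum_(r <= j < k) d j * val (pj j)); rewrite normrN expr2.
lra.
Qed.

End TriangularSequence.

Unset Implicit Arguments.

Theorem proposition18 (R : realType) (lam eps : R) (k : nat) :
  1 <= lam -> 0 < eps -> (0 < k)%N ->
  exists n : nat,
    forall (X : completeNormedModType R) (m : nat) (b : nat -> X),
      (n <= m)%N -> triangular lam m b ->
      exists phi : nat -> nat,
        subseq_index k m phi /\
        wide_s ((lam ^+ 2 + 1) / 2 + eps) k (fun i => b (phi i)).
Proof.
move=> lam_ge1 eps_gt0 k_gt0.
have lam_gt0 : 0 < lam := lt_le_trans ltr01 lam_ge1.
pose w := eps / (2 * k%:R * lam).
have kw : k%:R * (lam * w) = eps / 2 by rewrite /w; field; rewrite !gt_eqF // ltr0n.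
have w_gt0 : 0 < w by rewrite divr_gt0 // !mulr_gt0 // ltr0n.
pose K := (k + (Num.truncn (2 * lam / w)).+1 * k)%N.
have [N HN] :=
  exists_nearly_spreading_subseq k K (mulr_ge0 (ler0n _ 2) (ltW lam_gt0)) lam_gt0 eps_gt0.
exists N => X m b N_le [f [f_upper [f_lower [f_bounded b_bounded]]]].
have [H [H_sub H_size H_sp]] := HN X m b b_bounded N_le.
have H_index n : (n <= k)%N -> subseq_index n m (nth 0%N H).
  by move=> n_le; apply: subseq_iota_index H_sub _; rewrite H_size (leq_trans n_le (leq_addr _ _)).
have lam_le : lam <= (lam ^+ 2 + 1) / 2 + eps by have := sqr_ge0 (lam - 1); nra.
exists (nth 0%N H); split; first exact: H_index.
split; [|split].
- apply: basic_of_unit_ball => c r r_le c_le.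
  apply: le_trans (norm_initial_sum_le (ltW lam_gt0) f_upper f_lower f_bounded b_bounded
    w_gt0 (ltW eps_gt0) H_sub _ H_sp r_le c_le) _; first by rewrite H_size.
  by rewrite kw; lra.
- by move=> j j_lt; apply: le_trans lam_le; apply/b_bounded/(H_index k (leqnn k)).1.
- move=> i n c i_le n_le.
  apply: le_trans (norm_tail_sum_le (ltW lam_gt0) f_upper f_lower f_bounded c
    (H_index n n_le) i_le) _.
  by rewrite ler_wpM2r.
Qed.
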